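(* Let $\pi:L_{\mathcal F}\to L_{\mathcal G}$ satisfy (REG). For every finite partition $\Gamma$ of $\Omega$ into $\mathcal G$-measurable sets, every $X\in L_{\mathcal F}$ and $Q\in L^*_{\mathcal F}\cap\mathcal P$, the set \[\mathcal A^\Gamma_Q(X):=\{\pi^\Gamma(\xi)\mid \xi\in L_{\mathcal F},\ E_Q[\xi\mid\mathcal G]\ge_Q E_Q[X\mid\mathcal G]\}\] is downward directed; hence there exists a sequence $(\eta^Q_m)_{m\ge1}\subseteq L_{\mathcal F}$ with $E_Q[\eta^Q_m\mid\mathcal G]\ge_Q E_Q[X\mid\mathcal G]$ for all $m$ and $\pi^\Gamma(\eta^Q_m)\downarrow K^\Gamma(X,Q)$ as $m\uparrow\infty$.
   Context: Let $(\Omega,\mathcal F,\mathbb P)$ be a probability space and $\mathcal G\subseteq\mathcal F$ a sub-$\sigma$-algebra. (In)equalities hold $\mathbb P$-a.s. unless a measure is indicated ($\ge_Q$: $Q$-a.s.); $\inf$ is the $\mathbb P$-essential infimum. $L_{\mathcal F}\subseteq L^0(\Omega,\mathcal F,\mathbb P)$, $L_{\mathcal G}\subseteq L^0(\Omega,\mathcal G,\mathbb P)$ are vector lattices closed under multiplication by indicators of $\mathcal F$- (resp. $\mathcal G$-) measurable sets; the order continuous dual $L^*_{\mathcal F}$ of $(L_{\mathcal F},\ge)$ is a lattice contained in $L^1(\Omega,\mathcal F,\mathbb P)$ (functionals $X\mapsto E_{\mathbb P}[ZX]$), closed under multiplication by indicators of sets in $\mathcal F$. $\mathcal P$ = densities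 of probabilities $Q\ll\mathbb P$. (REG): $\pi(X\mathbf 1_A+Y\mathbf 1_{A^c})=\pi(X)\mathbf 1_A+\pi(Y)\mathbf 1_{A^c}$ for $A\in\mathcal G$. For $A\in\mathcal G$, $\pi_A(X):=\operatorname{ess\,sup}_{\omega\in A}\pi(X)(\omega)$; $\pi^\Gamma(X):=\sum_{A\in\Gamma}\pi_A(X)\mathbf 1_A$; $K^\Gamma(X,Q):=\inf\mathcal A^\Gamma_Q(X)$. A set of random variables is downward directed if any two elements have a common lower bound in the set. *)

From HB Require Import structures.
From mathcomp Require Import all_boot all_order all_algebra.
From mathcomp Require Import all_classical all_reals all_analysis.
From mathcomp Require Import measurable_realfun.
Set Implicit Arguments. Unset Strict Implicit. Unset Printing Implicit Defensive.
Import Order.TTheory GRing.Theory Num.Theory.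
Import numFieldNormedType.Exports.
Local Open Scope classical_set_scope.
Local Open Scope ring_scope.

Section defs.
Context (d : measure_display) (T : measurableType d) (R : realType).
Variable P : probability T R.

Definition sub_sigma (G : set (set T)) : Prop :=
  sigma_algebra setT G /\ G `<=` measurable.

Definition Gmeas (G : set (set T)) (f : T -> R) : Prop :=
  forall B : set R, measurable B -> G (f @^-1` B).

(* a vector lattice of (representatives of) random variables, each of which
   is "meas"-measurable, closed under multiplication by indicators of sets in S *)
Definition vlattice_ind (meas : (T -> R) -> Prop) (S : set (set T))
    (L : set (T -> R)) : Prop :=
  (forall X, L X -> meas X) /\
  [/\ L (cst 0),
      (forall X Y, L X -> L Y -> L (X \+ Y)),
      (forall (c : R) X, L X -> L (fun x => c * X x)),
      (forall X Y, L X -> L Y -> L (fun x => Num.max (X x) (Y x))) &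
      (forall X A, L X -> S A -> L (fun x => X x * \1_A x))].

(* Z is (the density of) an element of the order continuous dual of L:
   the functional X |-> E_P[Z X] is defined on L (Z X integrable) and is
   (sigma-)order continuous *)
Definition in_ocdual (L : set (T -> R)) (Z : T -> R) : Prop :=
  [/\ P.-integrable setT (fun x => (Z x)%:E),
      (forall X, L X -> P.-integrable setT (fun x => (Z x * X x)%:E)) &
      (forall Xn : nat -> T -> R, (forall n, L (Xn n)) ->
        (forall n, {ae P, forall x, Xn n.+1 x <= Xn n x}) ->
        {ae P, forall x, (fun n => Xn n x) @ \oo --> (0:R)} ->
        (fun n => (\int[P]_x (Z x * Xn n x)%:E)%E) @ \oo --> (0%:E : \bar R))].

(* Z is the density of a probability Q << P *)
Definition is_density (Z : T -> R) : Prop :=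
  [/\ measurable_fun setT Z, {ae P, forall x, 0 <= Z x} &
      (\int[P]_x (Z x)%:E = 1%:E)%E].

(* Y is a version of E_Q[xi | G], where dQ = Z dP *)
Definition is_condexp (G : set (set T)) (Z xi Y : T -> R) : Prop :=
  [/\ Gmeas G Y, P.-integrable setT (fun x => (Y x * Z x)%:E) &
      forall A, G A ->
        (\int[P]_(x in A) (Y x * Z x)%:E = \int[P]_(x in A) (xi x * Z x)%:E)%E].

(* E_Q[xi | G] >=_Q E_Q[X | G]  (Q-a.s. = P-a.s. on {Z > 0}) *)
Definition ce_geQ (G : set (set T)) (Z xi X : T -> R) : Prop :=
  forall Yxi YX, is_condexp G Z xi Yxi -> is_condexp G Z X YX ->
    {ae P, forall x, 0 < Z x -> YX x <= Yxi x}.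

Definition REG (G : set (set T)) (LF : set (T -> R)) (pi : (T -> R) -> T -> R) :=
  forall X Y A, LF X -> LF Y -> G A ->
    {ae P, forall x, pi (fun w => X w * \1_A w + Y w * \1_(~` A) w) x
                     = pi X x * \1_A x + pi Y x * \1_(~` A) x}.

Definition Gpartition (G : set (set T)) (n : nat) (Gam : 'I_n -> set T) : Prop :=
  [/\ forall i, G (Gam i), trivIset setT Gam & \bigcup_(i in setT) Gam i = setT].

Definition piA (pi : (T -> R) -> T -> R) (A : set T) (X : T -> R) : \bar R :=
  ereal_inf [set y : \bar R | {ae P, forall x, A x -> ((pi X x)%:E <= y)%E}].

Definition piGam (pi : (T -> R) -> T -> R) (n : nat) (Gam : 'I_n -> set T)
    (X : T -> R) : T -> \bar R :=
  fun x => (\sum_(i < n) (piA pi (Gam i) X * (\1_(Gam i) x)%:E))%E.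

Definition AGamQ (G : set (set T)) (LF : set (T -> R)) (pi : (T -> R) -> T -> R)
    (n : nat) (Gam : 'I_n -> set T) (Z X : T -> R) : set (T -> \bar R) :=
  [set Y | exists xi, LF xi /\ ce_geQ G Z xi X /\ Y = piGam pi Gam xi].

Definition down_directed (S : set (T -> \bar R)) : Prop :=
  forall Y1 Y2, S Y1 -> S Y2 -> exists2 Y3, S Y3 &
    {ae P, forall x, (Y3 x <= Y1 x)%E /\ (Y3 x <= Y2 x)%E}.

Definition is_essinf (S : set (T -> \bar R)) (K : T -> \bar R) : Prop :=
  [/\ measurable_fun [set: T] (K : T -> \bar R),
      (forall Y, S Y -> {ae P, forall x, (K x <= Y x)%E}) &
      (forall K' : T -> \bar R, measurable_fun [set: T] K' ->
         (forall Y, S Y -> {ae P, forall x, (K' x <= Y x)%E}) ->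
         {ae P, forall x, (K' x <= K x)%E})].
End defs.

From HB Require Import structures.
From mathcomp Require Import all_boot all_order all_algebra.
From mathcomp Require Import all_classical all_reals all_analysis.
From mathcomp Require Import measurable_realfun.
Set Implicit Arguments. Unset Strict Implicit. Unset Printing Implicit Defensive.
Import Order.TTheory GRing.Theory Num.Theory.
Import numFieldNormedType.Exports.
Local Open Scope classical_set_scope.
Local Open Scope ring_scope.

(* For admissible xi1, xi2 (i.e. E_Q[xi|G] >=_Q E_Q[X|G]), splice them along the
   union B of the cells of Gam on which pi_A(xi1) <= pi_A(xi2), taking xi1 on B and
   xi2 off B.  By (REG), pi^Gam of the spliced variable is the cellwise minimum of
   pi^Gam(xi1) and pi^Gam(xi2).  It stays admissible because, thanks to the
   existence of conditional expectations (Radon-Nikodym for Q restricted to G),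
   admissibility is equivalent to the G-local condition
   int_A X dQ <= int_A xi dQ for all A in G.
   As Gam is finite, the essential infimum of A^Gam_Q(X) is
   sum_A (inf_xi pi_A(xi)) 1_A; splicing minimizing sequences of all cells at
   each step and taking running minima yields the required decreasing sequence. *)

Section sub_sigma_algebra.
Context d (T : measurableType d) (R : realType) (G : set (set T)).
Hypothesis sG : sub_sigma G.
Local Notation TG := (g_sigma_algebraType G).

Lemma g_sigma_measurableE : (measurable : set (set TG)) = G.
Proof. exact: measurable_g_measurableTypeE sG.1. Qed.

Lemma sub_sigma_measurable A : G A -> measurable A.
Proof. exact: sG.2. Qed.

Lemma sub_sigmaI A B : G A -> G B -> G (A `&` B).
Proof. by rewrite -g_sigma_measurableE; exact: measurableI. Qed.

Lemma sub_sigmaC A : G A -> G (~` A).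
Proof. by rewrite -g_sigma_measurableE; exact: measurableC. Qed.

Lemma GmeasP (f : T -> R) : Gmeas G f <-> measurable_fun setT (f : TG -> R).
Proof.
split => [Gf _ B mB|mf B mB]; first by rewrite setTI g_sigma_measurableE; exact: Gf.
by have := mf measurableT B mB; rewrite setTI g_sigma_measurableE.
Qed.

Lemma Gmeas_measurable (f : T -> R) : Gmeas G f -> measurable_fun setT f.
Proof. by move=> Gf _ B mB; rewrite setTI; apply: sub_sigma_measurable; exact: Gf. Qed.

End sub_sigma_algebra.

Section real_integral.
Context d (T : measurableType d) (R : realType) (mu : {measure set T -> \bar R}).
Local Open Scope ereal_scope.

Lemma ae_eq_integral_EFin (f g : T -> R) A : measurable A ->
  measurable_fun setT f -> measurable_fun setT g -> {ae mu, forall x, f x = g x} ->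
  \int[mu]_(x in A) (f x)%:E = \int[mu]_(x in A) (g x)%:E.
Proof.
move=> mA mf mg fg; apply: ae_eq_integral => //.
- by apply/measurable_EFinP; exact: measurable_funTS.
- by apply/measurable_EFinP; exact: measurable_funTS.
by apply: filterS fg => x -> _.
Qed.

Lemma integrable_ae_eq_EFin (f g : T -> R) :
  measurable_fun setT g -> {ae mu, forall x, f x = g x} ->
  mu.-integrable setT (fun x => (f x)%:E) -> mu.-integrable setT (fun x => (g x)%:E).
Proof.
move=> mg fg /integrableP [/measurable_EFinP mf fi]; apply/integrableP; split.
  exact/measurable_EFinP.
rewrite (ae_eq_integral (fun x => `|(f x)%:E|)) //.
- by apply: measurableT_comp => //; exact/measurable_EFinP.
- by apply: measurableT_comp => //; exact/measurable_EFinP.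
by apply: filterS fg => x -> _.
Qed.

Lemma integral_setI_setIC (h : T -> R) A B : measurable A -> measurable B ->
  measurable_fun setT h ->
  \int[mu]_(x in A) (h x)%:E =
  \int[mu]_(x in A `&` B) (h x)%:E + \int[mu]_(x in A `&` ~` B) (h x)%:E.
Proof.
move=> mA mB mh; rewrite -integral_setU //; first by rewrite -setIUr setUCr setIT.
- exact: measurableI.
- by apply: measurableI => //; exact: measurableC.
- by apply/measurable_EFinP; exact: measurable_funTS.
- by rewrite /disj_set; apply/eqP/seteqP; split => x //= [[_ ?] [_ ?]].
Qed.

Lemma ae_le_integral_EFin (f g : T -> R) A : measurable A ->
  mu.-integrable setT (fun x => (f x)%:E) -> mu.-integrable setT (fun x => (g x)%:E) ->
  {ae mu, forall x, (f x <= g x)%R} ->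
  \int[mu]_(x in A) (f x)%:E <= \int[mu]_(x in A) (g x)%:E.
Proof.
move=> mA fi gi fg.
have fiA := integrableS measurableT mA (subsetT A) fi.
have giA := integrableS measurableT mA (subsetT A) gi.
have mf : measurable_fun setT f by apply/measurable_EFinP; exact: measurable_int fi.
have mg : measurable_fun setT g by apply/measurable_EFinP; exact: measurable_int gi.
rewrite -subre_ge0; last exact: integrable_fin_num.
rewrite -(@integralB_EFin _ _ _ _ _ g f) //.
rewrite (ae_eq_integral (fun x => ((g \- f)^\+ x)%:E)) //.
- by apply: integral_ge0 => x _; rewrite lee_fin funrpos_ge0.
- by apply: measurable_funTS; apply: emeasurable_funB; exact/measurable_EFinP.
- apply/measurable_EFinP; apply: measurable_funTS; apply: measurable_funrpos.
  exact: measurable_funB.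
by apply: filterS fg => x h _; rewrite /funrpos /= (max_idPl _) // subr_ge0.
Qed.

End real_integral.

Section density_comparison.
Context d (T : measurableType d) (R : realType) (mu : {measure set T -> \bar R})
  (G : set (set T)).
Hypothesis sG : sub_sigma G.
Local Open Scope ereal_scope.

(* On the G-set [{Y2 < Y1}] the function [(Y1 - Y2) Z] is a.e. nonnegative with
   nonpositive integral, hence a.e. zero. *)
Lemma Gmeas_ae_le_of_integral_le (Z Y1 Y2 : T -> R) :
  measurable_fun setT Z -> {ae mu, forall x, (0 <= Z x)%R} ->
  Gmeas G Y1 -> Gmeas G Y2 ->
  mu.-integrable setT (fun x => (Y1 x * Z x)%:E) ->
  mu.-integrable setT (fun x => (Y2 x * Z x)%:E) ->
  (forall A, G A ->
     \int[mu]_(x in A) (Y1 x * Z x)%:E <= \int[mu]_(x in A) (Y2 x * Z x)%:E) ->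
  {ae mu, forall x, (0 < Z x)%R -> (Y1 x <= Y2 x)%R}.
Proof.
move=> mZ Z0 G1 G2 i1 i2 le12.
pose A := [set x | (Y2 x < Y1 x)%R].
have GA : G A.
  rewrite -(g_sigma_measurableE sG).
  have := measurable_fun_ltr ((GmeasP sG _).1 G2) ((GmeasP sG _).1 G1) measurableT
    (Y := [set true]) I.
  rewrite setTI; suff -> : A = (fun x => (Y2 x < Y1 x)%R) @^-1` [set true] by [].
  by apply/seteqP; split => x /= h //; apply/eqP.
have mA : measurable A := sub_sigma_measurable sG GA.
have mY1 := Gmeas_measurable sG G1; have mY2 := Gmeas_measurable sG G2.
pose g x := ((Y1 x - Y2 x) * Z x)%R.
have mg : measurable_fun setT (EFin \o g).
  by apply/measurable_EFinP; apply: measurable_funM => //; exact: measurable_funB.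
have intA_le0 : \int[mu]_(x in A) (g x)%:E <= 0.
  under eq_integral do rewrite /g mulrBl EFinB.
  rewrite (@integralB_EFin _ _ _ _ _ (fun x => Y1 x * Z x)%R (fun x => Y2 x * Z x)%R) //.
  - by rewrite sube_le0 le12.
  - exact: integrableS i1.
  - exact: integrableS i2.
have intA_abs : \int[mu]_(x in A) `|(g x)%:E| = \int[mu]_(x in A) (g x)%:E.
  apply: ae_eq_integral => //.
  - by apply: measurableT_comp => //; exact: measurable_funS mg.
  - exact: measurable_funS mg.
  apply: filterS Z0 => x Zx Ax; rewrite gee0_abs // lee_fin /g mulr_ge0 //.
  by rewrite subr_ge0 ltW.
have : \int[mu]_(x in A) `|(g x)%:E| = 0.
  by apply/eqP; rewrite eq_le integral_ge0 ?andbT ?intA_abs // => x _; exact: abse_ge0.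
move/(ae_eq_integral_abs mu mA (measurable_funS measurableT (subsetT A) mg)).
apply: filterS => x h Zx; rewrite leNgt; apply/negP => hx.
have := h hx; rewrite /g /cst => -[] /eqP; rewrite mulf_eq0 subr_eq0.
by case/orP => /eqP e; [move: hx; rewrite e ltxx | move: Zx; rewrite e ltxx].
Qed.

End density_comparison.

Section condexp_existence.
Context d (T : measurableType d) (R : realType)
  (mu : {sigma_finite_measure set T -> \bar R}) (G : set (set T)) (Z : T -> R).
Hypotheses (sG : sub_sigma G) (mZ : measurable_fun setT Z)
  (Z_ge0 : forall x, 0 <= Z x) (iZ : mu.-integrable setT (fun x => (Z x)%:E)).
Local Open Scope ereal_scope.
Local Open Scope charge_scope.

Definition dens_measure (A : set T) := \int[mu]_(x in A) (Z x)%:E.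

Let dens_measure0 : dens_measure set0 = 0. Proof. exact: integral_set0. Qed.

Let dens_measure_ge0 A : 0 <= dens_measure A.
Proof. by apply: integral_ge0 => x _; rewrite lee_fin. Qed.

Let dens_measure_sigma_additive : semi_sigma_additive dens_measure.
Proof.
apply: semi_sigma_additive_nng_induced; first exact/measurable_EFinP.
by move=> x; rewrite lee_fin.
Qed.

HB.instance Definition _ := isMeasure.Build _ _ _ dens_measure
  dens_measure0 dens_measure_ge0 dens_measure_sigma_additive.

Let dens_measure_fin : fin_num_fun dens_measure.
Proof. by move=> A mA; apply: integrable_fin_num => //; exact: integrableS iZ. Qed.

HB.instance Definition _ := @Measure_isFinite.Build _ _ _ dens_measure
  dens_measure_fin.

Lemma dens_measure_dominates : dens_measure `<< mu.
Proof.
apply/null_content_dominatesP => A mA muA0.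
rewrite /dens_measure (eq_integral (fun x => `|(Z x)%:E|)); last first.
  by move=> x _; rewrite gee0_abs // lee_fin.
by apply: integral_abs_eq0 => //; apply/measurable_EFinP; exact: measurable_funTS.
Qed.

Lemma integral_dens_measure (g : T -> \bar R) E : measurable E ->
  dens_measure.-integrable E g ->
  \int[dens_measure]_(x in E) g x = \int[mu]_(x in E) (g x * (Z x)%:E).
Proof.
move=> mE ig.
rewrite -(Radon_Nikodym_change_of_variables dens_measure_dominates mE ig).
have RNE : ae_eq mu setT
    ('d (charge_of_finite_measure dens_measure) '/d mu) (fun x => (Z x)%:E).
  apply: integral_ae_eq => //.
  - by apply: Radon_Nikodym_integrable; exact: dens_measure_dominates.
  - exact/measurable_EFinP.
  - by move=> F _ mF; rewrite -Radon_Nikodym_integral //; exact: dens_measure_dominates.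
apply: ae_eq_integral => //.
- apply: emeasurable_funM; first exact: measurable_int ig.
  apply/measurable_funTS/measurable_int/Radon_Nikodym_integrable.
  exact: dens_measure_dominates.
- apply: emeasurable_funM; first exact: measurable_int ig.
  by apply/measurable_EFinP; exact: measurable_funTS.
by apply: filterS RNE => x h Ex; rewrite h.
Qed.

Local Notation TG := (g_sigma_algebraType G).

(* Radon-Nikodym derivatives taken on [TG], i.e. [T] equipped with [G], are
   G-measurable: [Q] and the charge [A |-> int_A xi dQ] are moved there by [idG]. *)
Definition idG : T -> TG := id.

Lemma measurable_idG : measurable_fun setT idG.
Proof.
move=> _ B; rewrite (g_sigma_measurableE sG) setTI.
exact: sub_sigma_measurable.
Qed.

Definition dens_measureG : set TG -> \bar R := pushforward dens_measure idG.

Let dens_measureG0 : dens_measureG set0 = 0.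
Proof. by rewrite /dens_measureG /pushforward preimage_set0 measure0. Qed.

Let dens_measureG_ge0 A : 0 <= dens_measureG A.
Proof. by rewrite /dens_measureG /pushforward; exact: measure_ge0. Qed.

Let dens_measureG_sigma_additive : semi_sigma_additive dens_measureG.
Proof.
move=> F mF tF mUF; rewrite /dens_measureG /pushforward preimage_bigcup.
apply: measure_semi_sigma_additive.
- by move=> n; rewrite -[X in measurable X]setTI; exact: measurable_idG.
- apply/trivIsetP => /= i j _ _ ij; rewrite -preimage_setI.
  by move/trivIsetP : tF => /(_ _ _ _ _ ij) ->//; rewrite preimage_set0.
- by rewrite -preimage_bigcup -[X in measurable X]setTI; exact: measurable_idG.
Qed.

HB.instance Definition _ := isMeasure.Build _ _ _ dens_measureG
  dens_measureG0 dens_measureG_ge0 dens_measureG_sigma_additive.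

Let dens_measureG_fin : fin_num_fun dens_measureG.
Proof.
move=> A mA; rewrite /dens_measureG /pushforward; apply: fin_num_measure.
by rewrite -[X in measurable X]setTI; exact: measurable_idG.
Qed.

HB.instance Definition _ := @Measure_isFinite.Build _ _ _ dens_measureG
  dens_measureG_fin.

Variable xi : T -> R.
Hypotheses (mxi : measurable_fun setT xi)
  (ixiZ : mu.-integrable setT (fun x => (xi x * Z x)%:E)).

Definition xi_chargeG (A : set TG) := \int[mu]_(x in A) (xi x * Z x)%:E.

Let xi_chargeG0 : xi_chargeG set0 = 0. Proof. exact: integral_set0. Qed.

Let xi_chargeG_fin A : measurable A -> xi_chargeG A \is a fin_num.
Proof.
rewrite (g_sigma_measurableE sG) => GA.
have mA := sub_sigma_measurable sG GA.
by apply: integrable_fin_num => //; exact: integrableS ixiZ.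
Qed.

Let xi_chargeG_sigma_additive : semi_sigma_additive xi_chargeG.
Proof.
move=> F mF tF mUF.
apply: (@charge_semi_sigma_additive _ _ _ (induced_charge ixiZ) F) => //.
- by move=> k; apply: (sub_sigma_measurable sG); rewrite -(g_sigma_measurableE sG).
- by apply: (sub_sigma_measurable sG); rewrite -(g_sigma_measurableE sG).
Qed.

HB.instance Definition _ := isCharge.Build _ _ _ xi_chargeG
  xi_chargeG0 xi_chargeG_fin xi_chargeG_sigma_additive.

Lemma xi_chargeG_dominates : xi_chargeG `<< dens_measureG.
Proof.
apply/null_content_dominatesP => A mA QA0.
have mA' : measurable (A : set T).
  by apply: (sub_sigma_measurable sG); rewrite -(g_sigma_measurableE sG).
have mEZ : measurable_fun (A : set T) (fun x => (Z x)%:E).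
  by apply/measurable_EFinP; exact: measurable_funTS.
have Z0 : \int[mu]_(x in A) `|(Z x)%:E| = 0.
  rewrite -QA0 /dens_measureG /pushforward /dens_measure; apply: eq_integral => x _.
  by rewrite gee0_abs // lee_fin.
rewrite /xi_chargeG (ae_eq_integral (cst 0)) ?integral0 //.
- apply/measurable_EFinP; apply: measurable_funTS; exact: measurable_funM.
- apply: filterS ((ae_eq_integral_abs mu mA' mEZ).1 Z0) => x h Ax.
  by move: (h Ax); rewrite /cst => -[] ->; rewrite mulr0.
Qed.

Let RN := 'd xi_chargeG '/d dens_measureG.

Let RN_integrable : dens_measureG.-integrable setT RN.
Proof. exact: Radon_Nikodym_integrable xi_chargeG_dominates. Qed.

Let measurable_RN : measurable_fun setT RN.
Proof. exact: measurable_int RN_integrable. Qed.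

Let RN_dens_integrable : dens_measure.-integrable setT RN.
Proof.
apply/integrableP; split; first exact: measurableT_comp measurable_RN measurable_idG.
have mRN_abs : measurable_fun setT (fun y => `|RN y|).
  exact: measurableT_comp measurable_RN.
rewrite -(@ge0_integral_pushforward _ _ _ _ _ idG measurable_idG dens_measure setT
  (fun y => `|RN y|) measurableT (measurable_funTS mRN_abs) (fun y _ => abse_ge0 _)).
by move/integrableP : RN_integrable => [].
Qed.

Definition condexp_version x := fine (RN x).

Let condexp_versionE x : (condexp_version x)%:E = RN x.
Proof.
by rewrite /condexp_version fineK // (Radon_Nikodym_fin_num x xi_chargeG_dominates).
Qed.

Lemma Gmeas_condexp_version : Gmeas G condexp_version.
Proof. by apply/(GmeasP sG); apply: measurableT_comp => //; exact: measurable_RN. Qed.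

Lemma condexp_version_integrable :
  mu.-integrable setT (fun x => (condexp_version x * Z x)%:E).
Proof.
apply/integrableP; split.
  apply/measurable_EFinP; apply: measurable_funM => //.
  exact: (Gmeas_measurable sG Gmeas_condexp_version).
rewrite (_ : (fun x => _) = (fun x => `|RN x| * (Z x)%:E)); last first.
  apply/funext => x; rewrite EFinM abseM condexp_versionE.
  by rewrite (@gee0_abs _ (Z x)%:E) // lee_fin.
rewrite -integral_dens_measure //; last exact: integrable_abse RN_dens_integrable.
by move/integrableP : RN_dens_integrable => [].
Qed.

Lemma integral_condexp_version A : G A ->
  \int[mu]_(x in A) (condexp_version x * Z x)%:E =
  \int[mu]_(x in A) (xi x * Z x)%:E.
Proof.
move=> GA; have mA := sub_sigma_measurable sG GA.
have mA' : measurable (A : set TG) by rewrite (g_sigma_measurableE sG).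
have iRNA := integrableS measurableT mA (subsetT _) RN_dens_integrable.
transitivity (\int[mu]_(x in A) (RN x * (Z x)%:E)).
  by apply: eq_integral => x _; rewrite EFinM condexp_versionE.
rewrite -integral_dens_measure //.
rewrite -(@integral_pushforward _ _ _ _ _ idG measurable_idG dens_measure A RN) //.
by rewrite -(Radon_Nikodym_integral xi_chargeG_dominates mA').
Qed.

Lemma exists_nonneg_density_condexp : exists Y, [/\ Gmeas G Y,
  mu.-integrable setT (fun x => (Y x * Z x)%:E) &
  forall A, G A -> \int[mu]_(x in A) (Y x * Z x)%:E = \int[mu]_(x in A) (xi x * Z x)%:E].
Proof.
exists condexp_version; split; [exact: Gmeas_condexp_version|
  exact: condexp_version_integrable|exact: integral_condexp_version].
Qed.

End condexp_existence.

Section condexp_density.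
Context d (T : measurableType d) (R : realType) (P : probability T R)
  (G : set (set T)) (Z : T -> R).
Hypotheses (sG : sub_sigma G) (dZ : is_density P Z).
Local Open Scope ereal_scope.
Local Notation Zpos := (funrpos Z).

Let mZ : measurable_fun setT Z. Proof. by case: dZ. Qed.

Let mZpos : measurable_fun setT Zpos. Proof. exact: measurable_funrpos. Qed.

Let Zpos_ae : {ae P, forall x, Zpos x = Z x}.
Proof. by case: dZ => _ Z0 _; apply: filterS Z0 => x Zx; exact/max_idPl. Qed.

Let Zpos_integrable : P.-integrable setT (fun x => (Zpos x)%:E).
Proof.
apply/integrableP; split; first exact/measurable_EFinP.
rewrite (ae_eq_integral (fun x => (Z x)%:E)) //.
- by case: dZ => _ _ ->; exact: ltey.
- by apply: measurableT_comp => //; exact/measurable_EFinP.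
- exact/measurable_EFinP.
by apply: filterS Zpos_ae => x h _; rewrite -h gee0_abs // lee_fin.
Qed.

Let mulZpos_ae (h : T -> R) : {ae P, forall x, h x * Zpos x = h x * Z x}%R.
Proof. by apply: filterS Zpos_ae => x ->. Qed.

(* [Z] is nonnegative only almost everywhere, so the Radon-Nikodym construction
   is run with the density [Zpos]. *)
Lemma exists_condexp (xi : T -> R) : measurable_fun setT xi ->
  P.-integrable setT (fun x => (Z x * xi x)%:E) -> exists Y, is_condexp P G Z xi Y.
Proof.
move=> mxi ixiZ.
have ixiZpos : P.-integrable setT (fun x => (xi x * Zpos x)%:E).
  apply: (integrable_ae_eq_EFin (f := fun x => Z x * xi x)%R) => //.
  - exact: measurable_funM.
  - by apply: filterS Zpos_ae => x ->; rewrite mulrC.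
have [Y [GY iY eY]] := exists_nonneg_density_condexp sG mZpos (@funrpos_ge0 _ _ Z)
  Zpos_integrable mxi ixiZpos.
have mY := Gmeas_measurable sG GY.
exists Y; split => //.
- by apply: integrable_ae_eq_EFin iY; [exact: measurable_funM|exact: mulZpos_ae].
- move=> A GA; have mA := sub_sigma_measurable sG GA.
  have eZpos (h : T -> R) : measurable_fun setT h ->
      \int[P]_(x in A) (h x * Z x)%:E = \int[P]_(x in A) (h x * Zpos x)%:E.
    move=> mh; apply: ae_eq_integral_EFin => //; try exact: measurable_funM.
    by apply: filterS (mulZpos_ae h) => x <-.
  by rewrite !eZpos //; exact: eY.
Qed.

End condexp_density.

Definition splice T (R : pzRingType) (xi1 xi2 : T -> R) (B : set T) :=
  fun w => xi1 w * \1_B w + xi2 w * \1_(~` B) w.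

Lemma splice_in T (R : pzRingType) (xi1 xi2 : T -> R) B x :
  B x -> splice xi1 xi2 B x = xi1 x.
Proof.
by move=> Bx; rewrite /splice !indicE mem_set // memNset //= mulr1 mulr0 addr0.
Qed.

Lemma splice_notin T (R : pzRingType) (xi1 xi2 : T -> R) B x :
  ~ B x -> splice xi1 xi2 B x = xi2 x.
Proof.
by move=> Bx; rewrite /splice !indicE memNset // mem_set //= mulr1 mulr0 add0r.
Qed.

Section condexp_order.
Context d (T : measurableType d) (R : realType) (P : probability T R)
  (G : set (set T)) (LF : set (T -> R)) (X Z : T -> R).
Hypotheses (sG : sub_sigma G) (hLF : vlattice_ind (measurable_fun setT) measurable LF)
  (LFX : LF X) (hZ : in_ocdual P LF Z) (dZ : is_density P Z).
Local Open Scope ereal_scope.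

Definition integral_geG (xi : T -> R) := forall A, G A ->
  \int[P]_(x in A) (X x * Z x)%:E <= \int[P]_(x in A) (xi x * Z x)%:E.

Let mZ : measurable_fun setT Z. Proof. by case: dZ. Qed.

Let Z_ge0 : {ae P, forall x, (0 <= Z x)%R}. Proof. by case: dZ. Qed.

Let integrable_LF xi : LF xi -> P.-integrable setT (fun x => (Z x * xi x)%:E).
Proof. by case: hZ => _ + _; apply. Qed.

Lemma ce_geQP xi : LF xi -> ce_geQ P G Z xi X <-> integral_geG xi.
Proof.
move=> LFxi; split => [hce A GA|hxi Yxi YX [GYxi iYxi eqxi] [GYX iYX eqX]]; last first.
  apply: (Gmeas_ae_le_of_integral_le sG mZ Z_ge0) => // A GA.
  by rewrite eqxi // eqX //; exact: hxi.
have [Yxi hYxi] := exists_condexp sG dZ (hLF.1 _ LFxi) (integrable_LF LFxi).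
have [YX hYX] := exists_condexp sG dZ (hLF.1 _ LFX) (integrable_LF LFX).
have YXle := hce _ _ hYxi hYX.
case: hYxi => _ iYxi eYxi; case: hYX => _ iYX eYX.
rewrite -eYxi // -eYX //; apply: ae_le_integral_EFin => //.
  exact: sub_sigma_measurable GA.
apply: filterS2 YXle Z_ge0 => x YXx; rewrite le0r => /orP[/eqP ->|Zx].
  by rewrite !mulr0.
by apply: ler_wpM2r; [exact: ltW|exact: YXx].
Qed.

Lemma LF_splice xi1 xi2 B : LF xi1 -> LF xi2 -> measurable B -> LF (splice xi1 xi2 B).
Proof.
move=> L1 L2 mB; case: hLF => _ [_ LFD _ _ LFind].
by apply: LFD; apply: LFind => //; exact: measurableC.
Qed.

Lemma integral_geG_splice xi1 xi2 B : LF xi1 -> LF xi2 -> G B ->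
  integral_geG xi1 -> integral_geG xi2 -> integral_geG (splice xi1 xi2 B).
Proof.
move=> L1 L2 GB h1 h2 A GA.
have mA := sub_sigma_measurable sG GA; have mB := sub_sigma_measurable sG GB.
have mX := hLF.1 _ LFX; have msplice := hLF.1 _ (LF_splice L1 L2 mB).
rewrite (@integral_setI_setIC _ _ _ P (fun x => X x * Z x)%R A B mA mB);
  last exact: measurable_funM.
rewrite (@integral_setI_setIC _ _ _ P (fun x => splice xi1 xi2 B x * Z x)%R A B mA mB);
  last exact: measurable_funM.
apply: leeD.
  rewrite [leRHS](eq_integral (fun x => (xi1 x * Z x)%:E)).
    exact: h1 (sub_sigmaI sG GA GB).
  by move=> x /set_mem[_ Bx]; rewrite splice_in.
rewrite [leRHS](eq_integral (fun x => (xi2 x * Z x)%:E)).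
  exact: h2 (sub_sigmaI sG GA (sub_sigmaC sG GB)).
by move=> x /set_mem[_ Bx]; rewrite splice_notin.
Qed.

End condexp_order.

Section finite_partition.
Context (T : Type) (n : nat) (Gam : 'I_n -> set T).
Hypotheses (Gam_disj : trivIset setT Gam)
  (Gam_cover : \bigcup_(i in setT) Gam i = setT).

Lemma partition_cell x : exists i, Gam i x.
Proof.
have : (\bigcup_(i in setT) Gam i) x by rewrite Gam_cover.
by case=> i _ Gix; exists i.
Qed.

Lemma partition_cell_eq i j x : Gam i x -> Gam j x -> i = j.
Proof. by move=> Gix Gjx; apply: Gam_disj => //; exists x. Qed.

Lemma partition_sum_indic (R : realType) (b : 'I_n -> \bar R) i x : Gam i x ->
  (\sum_(j < n) (b j * (\1_(Gam j) x)%:E) = b i)%E.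
Proof.
move=> Gix; rewrite (bigD1 i) //= big1 ?adde0; first by rewrite indicE mem_set // mule1.
move=> j ji; rewrite indicE memNset ?mule0 // => Gjx.
by move: ji; rewrite (partition_cell_eq Gix Gjx) eqxx.
Qed.

End finite_partition.

Section piA_splice.
Context d (T : measurableType d) (R : realType) (P : probability T R)
  (G : set (set T)) (LF : set (T -> R)) (pi : (T -> R) -> T -> R).
Hypothesis hREG : REG P G LF pi.
Local Open Scope ereal_scope.

Lemma eq_piA A xi xi' : {ae P, forall x, A x -> pi xi x = pi xi' x} ->
  piA P pi A xi = piA P pi A xi'.
Proof.
move=> h; congr ereal_inf; apply/seteqP; split => y /= hy.
  by apply: filterS2 h hy => x e h' Ax; rewrite -e //; exact: h' Ax.
by apply: filterS2 h hy => x e h' Ax; rewrite e //; exact: h' Ax.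
Qed.

Lemma piA_splice_in B A xi1 xi2 : LF xi1 -> LF xi2 -> G B -> A `<=` B ->
  piA P pi A (splice xi1 xi2 B) = piA P pi A xi1.
Proof.
move=> L1 L2 GB AB; apply: eq_piA; apply: filterS (hREG L1 L2 GB) => x h Ax.
by rewrite [pi _ x]h -/(splice (pi xi1) (pi xi2) B x) splice_in //; exact: AB.
Qed.

Lemma piA_splice_notin B A xi1 xi2 : LF xi1 -> LF xi2 -> G B -> A `<=` ~` B ->
  piA P pi A (splice xi1 xi2 B) = piA P pi A xi2.
Proof.
move=> L1 L2 GB AB; apply: eq_piA; apply: filterS (hREG L1 L2 GB) => x h Ax.
by rewrite [pi _ x]h -/(splice (pi xi1) (pi xi2) B x) splice_notin //; exact: AB.
Qed.

End piA_splice.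

Section essinf_AGamQ.
Context d (T : measurableType d) (R : realType) (P : probability T R)
  (G : set (set T)) (LF : set (T -> R)) (pi : (T -> R) -> T -> R)
  (n : nat) (Gam : 'I_n -> set T) (X Z : T -> R).
Hypotheses (sG : sub_sigma G) (hLF : vlattice_ind (measurable_fun setT) measurable LF)
  (hREG : REG P G LF pi) (hGam : Gpartition G Gam) (LFX : LF X)
  (hZ : in_ocdual P LF Z) (dZ : is_density P Z).
Local Open Scope ereal_scope.
Local Notation a i xi := (piA P pi (Gam i) xi).

Let GGam i : G (Gam i). Proof. by case: hGam. Qed.

Let Gam_cell x : exists i, Gam i x.
Proof. by case: hGam => _ ? ?; exact: partition_cell. Qed.

Let Gam_cell_eq i j x : Gam i x -> Gam j x -> i = j.
Proof. by case: hGam => _ ? _; exact: partition_cell_eq. Qed.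

Let Gam_sum_indic (b : 'I_n -> \bar R) i x : Gam i x ->
  (\sum_(j < n) (b j * (\1_(Gam j) x)%:E))%E = b i.
Proof. by case: hGam => _ ? _; exact: partition_sum_indic. Qed.

Lemma piGam_cell xi i x : Gam i x -> piGam P pi Gam xi x = a i xi.
Proof. exact: Gam_sum_indic. Qed.

Definition admissible xi := LF xi /\ ce_geQ P G Z xi X.

Lemma admissibleX : admissible X.
Proof. by split => //; apply/(ce_geQP sG hLF LFX hZ dZ LFX). Qed.

Lemma admissible_splice xi1 xi2 B : G B ->
  admissible xi1 -> admissible xi2 -> admissible (splice xi1 xi2 B).
Proof.
move=> GB [L1 c1] [L2 c2]; have mB := sub_sigma_measurable sG GB.
have Ls := LF_splice hLF L1 L2 mB; split => //.
apply/(ce_geQP sG hLF LFX hZ dZ Ls).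
apply: (integral_geG_splice sG hLF LFX dZ L1 L2 GB).
- exact/(ce_geQP sG hLF LFX hZ dZ L1).
- exact/(ce_geQP sG hLF LFX hZ dZ L2).
Qed.

Definition cells_le xi1 xi2 := \bigcup_(i in [set i | a i xi1 <= a i xi2]) Gam i.

Lemma G_cells_le xi1 xi2 : G (cells_le xi1 xi2).
Proof.
rewrite -(g_sigma_measurableE sG); apply: fin_bigcup_measurable => // i _.
by rewrite (g_sigma_measurableE sG).
Qed.

Definition splice_min xi1 xi2 := splice xi1 xi2 (cells_le xi1 xi2).

Lemma piA_splice_min xi1 xi2 i : LF xi1 -> LF xi2 ->
  a i (splice_min xi1 xi2) = Order.min (a i xi1) (a i xi2).
Proof.
move=> L1 L2; rewrite minEle; case: ifPn => le12.
  by apply: (piA_splice_in hREG) => //; [exact: G_cells_le|move=> x Gix; exists i].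
apply: (piA_splice_notin hREG) => //; first exact: G_cells_le.
by move=> x Gix [j /= le12' Gjx]; move: le12; rewrite (Gam_cell_eq Gix Gjx) le12'.
Qed.

Lemma admissible_splice_min xi1 xi2 :
  admissible xi1 -> admissible xi2 -> admissible (splice_min xi1 xi2).
Proof. exact/admissible_splice/G_cells_le. Qed.

Lemma AGamQ_down_directed : down_directed P (AGamQ P G LF pi Gam Z X).
Proof.
move=> Y1 Y2 [xi1 [L1 [c1 ->]]] [xi2 [L2 [c2 ->]]].
have [Ls cs] := admissible_splice_min (conj L1 c1) (conj L2 c2).
exists (piGam P pi Gam (splice_min xi1 xi2)); first by exists (splice_min xi1 xi2).
apply: aeW => x; have [i Gix] := Gam_cell x.
by rewrite !(piGam_cell _ Gix) piA_splice_min // !ge_min !lexx orbT.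
Qed.

Definition splice_min_seq (s : seq 'I_n) (F : 'I_n -> T -> R) :=
  foldr (fun i acc => splice_min (F i) acc) X s.

Lemma admissible_splice_min_seq s F : (forall i, admissible (F i)) ->
  admissible (splice_min_seq s F).
Proof.
move=> hF; elim: s => [|j s IH] /=; [exact: admissibleX|exact: admissible_splice_min].
Qed.

Lemma piA_splice_min_seq_le s F : (forall i, admissible (F i)) -> forall i, i \in s ->
  a i (splice_min_seq s F) <= a i (F i).
Proof.
move=> hF; elim: s => [//|j s IH] i; rewrite inE /=.
rewrite piA_splice_min; [|exact: (hF j).1|exact: (admissible_splice_min_seq s hF).1].
by case/orP => [/eqP ->|ins]; rewrite ge_min ?lexx // IH ?orbT.
Qed.

Fixpoint running_splice_min (zeta : nat -> T -> R) (m : nat) : T -> R :=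
  if m is m'.+1 then splice_min (running_splice_min zeta m') (zeta m) else zeta 0%N.

Section running_splice_min.
Variable zeta : nat -> T -> R.
Hypothesis adm_zeta : forall k, admissible (zeta k).

Lemma admissible_running_splice_min m : admissible (running_splice_min zeta m).
Proof. by elim: m => [|m IH] /=; [exact: adm_zeta|exact: admissible_splice_min]. Qed.

Let piA_running_splice_minS m i : a i (running_splice_min zeta m.+1) =
  Order.min (a i (running_splice_min zeta m)) (a i (zeta m.+1)).
Proof.
rewrite piA_splice_min //.
  exact: (admissible_running_splice_min m).1.
exact: (adm_zeta _).1.
Qed.

Lemma piA_running_splice_min_nonincr m i :
  a i (running_splice_min zeta m.+1) <= a i (running_splice_min zeta m).
Proof. by rewrite piA_running_splice_minS ge_min lexx. Qed.

Lemma piA_running_splice_min_le m i : a i (running_splice_min zeta m) <= a i (zeta m).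
Proof. by case: m => [//|m]; rewrite piA_running_splice_minS ge_min lexx orbT. Qed.

End running_splice_min.

Definition cell_inf i := ereal_inf [set a i xi | xi in admissible].

Lemma cell_inf_le i xi : admissible xi -> cell_inf i <= a i xi.
Proof. by move=> adm; apply: ereal_inf_lbound; exists xi. Qed.

Lemma exists_minimizing_seq : exists eta : nat -> T -> R,
  [/\ forall m, admissible (eta m),
      forall m i, a i (eta m.+1) <= a i (eta m) &
      forall i, a i (eta m) @[m --> \oo] --> cell_inf i].
Proof.
have V0 i : [set a i xi | xi in admissible] != set0.
  by apply/set0P; exists (a i X); exists X => //; exact: admissibleX.
pose u i := s2val (ereal_inf_seq (V0 i)).
have [xs hxs] : exists xs : 'I_n -> nat -> T -> R,
    forall i k, admissible (xs i k) /\ a i (xs i k) = u i k.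
  have hx i k : exists xi, admissible xi /\ a i xi = u i k.
    by have [xi ? ?] := s2valP (ereal_inf_seq (V0 i)) k; exists xi.
  by exists (fun i k => sval (cid (hx i k))) => i k; exact: svalP (cid (hx i k)).
pose zeta k := splice_min_seq (enum 'I_n) (fun i => xs i k).
have adm_zeta k : admissible (zeta k).
  by apply: admissible_splice_min_seq => i; exact: (hxs i k).1.
exists (running_splice_min zeta); split.
- exact: admissible_running_splice_min.
- exact: piA_running_splice_min_nonincr.
move=> i; apply: (@squeeze_cvge _ _ _ _ (cst (cell_inf i))
  (fun m => a i (running_splice_min zeta m)) (u i)).
- apply: nearW => m; rewrite cell_inf_le /=; last exact: admissible_running_splice_min.
  apply: (le_trans (piA_running_splice_min_le adm_zeta m i)); rewrite -(hxs i m).2.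
  by apply: piA_splice_min_seq_le; [move=> j; exact: (hxs j m).1|exact: mem_enum].
- exact: cvg_cst.
- exact: (s2valP' (ereal_inf_seq (V0 i))).
Qed.

Definition cell_essinf x := \sum_(i < n) (cell_inf i * (\1_(Gam i) x)%:E).

Lemma cell_essinf_cell i x : Gam i x -> cell_essinf x = cell_inf i.
Proof. exact: Gam_sum_indic. Qed.

Lemma is_essinf_cell_essinf : is_essinf P (AGamQ P G LF pi Gam Z X) cell_essinf.
Proof.
split.
- apply: emeasurable_sum => i; apply: emeasurable_funM => //.
  apply/measurable_EFinP/measurable_indic; apply: (sub_sigma_measurable sG); exact: GGam.
- move=> Y [xi [L [ce ->]]]; apply: aeW => x; have [i Gix] := Gam_cell x.
  by rewrite (cell_essinf_cell Gix) (piGam_cell _ Gix); exact: cell_inf_le.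
move=> K' _ K'le; have [eta [adm_eta _ eta_cvg]] := exists_minimizing_seq.
have K'le_eta m : {ae P, forall x, K' x <= piGam P pi Gam (eta m) x}.
  by apply: K'le; exists (eta m); have [? ?] := adm_eta m.
apply: filterS (ae_foralln K'le_eta) => x K'x; have [i Gix] := Gam_cell x.
rewrite (cell_essinf_cell Gix); apply: (cvge_to_ge (eta_cvg i)).
by apply: nearW => m; rewrite -(piGam_cell _ Gix); exact: K'x.
Qed.

Lemma piGam_cvg_cell_essinf (eta : nat -> T -> R) :
  (forall i, a i (eta m) @[m --> \oo] --> cell_inf i) ->
  {ae P, forall x, piGam P pi Gam (eta m) x @[m --> \oo] --> cell_essinf x}.
Proof.
move=> eta_cvg; apply: aeW => x; have [i Gix] := Gam_cell x.
rewrite (cell_essinf_cell Gix) (_ : (fun m => _) = (fun m => a i (eta m))) //.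
by apply/funext => m; rewrite (piGam_cell _ Gix).
Qed.

Lemma piGam_nonincr (eta : nat -> T -> R) :
  (forall m i, a i (eta m.+1) <= a i (eta m)) ->
  forall m, {ae P, forall x, piGam P pi Gam (eta m.+1) x <= piGam P pi Gam (eta m) x}.
Proof.
move=> eta_nonincr m; apply: aeW => x; have [i Gix] := Gam_cell x.
by rewrite !(piGam_cell _ Gix).
Qed.

End essinf_AGamQ.

Theorem lemma30 (d : measure_display) (T : measurableType d) (R : realType)
  (P : probability T R) (G : set (set T))
  (LF LG : set (T -> R)) (pi : (T -> R) -> T -> R) :
  sub_sigma G ->
  vlattice_ind (measurable_fun setT) measurable LF ->
  vlattice_ind (Gmeas G) G LG ->
  (forall X, LF X -> LG (pi X)) ->
  (forall X Y, LF X -> LF Y -> {ae P, forall x, X x = Y x} ->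
     {ae P, forall x, pi X x = pi Y x}) ->
  REG P G LF pi ->
  forall (n : nat) (Gam : 'I_n -> set T) (X Z : T -> R),
  Gpartition G Gam -> LF X -> in_ocdual P LF Z -> is_density P Z ->
  down_directed P (AGamQ P G LF pi Gam Z X) /\
  exists eta : nat -> T -> R,
    [/\ forall m, LF (eta m) /\ ce_geQ P G Z (eta m) X,
        forall m, {ae P, forall x,
          (piGam P pi Gam (eta m.+1) x <= piGam P pi Gam (eta m) x)%E} &
        exists K, is_essinf P (AGamQ P G LF pi Gam Z X) K /\
          {ae P, forall x, (fun m => piGam P pi Gam (eta m) x) @ \oo --> K x}].
Proof.
move=> sG hLF _ _ _ hREG n Gam X Z hGam LFX hZ dZ.
split; first exact: (AGamQ_down_directed sG hLF hREG hGam LFX hZ dZ).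
have [eta [adm_eta eta_nonincr eta_cvg]] :=
  exists_minimizing_seq sG hLF hREG hGam LFX hZ dZ.
exists eta; split => //; first exact: (piGam_nonincr hGam).
exists (cell_essinf P G LF pi Gam X Z); split.
  exact: (is_essinf_cell_essinf sG hLF hREG hGam LFX hZ dZ).
exact: (piGam_cvg_cell_essinf hGam).
Qed.
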